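(* Let $1<p<\infty$, $n\ge1$, and let $f\in C([0,\infty))$, $g\in C^{0,1}([0,\infty))$ be strictly increasing with $f(0)=g(0)=0$. Let $F(s)=\int_0^s f(t)\,dt$ and $\Gamma(s)=\int_0^{2s}g(t)\,dt+\frac{p-1}{p}c\,s^p$ with $c=\big(\frac{p}{p-1}\big)^p n$, and assume $$\int_1^\infty\frac{ds}{\Gamma^{-1}(F(s))}<\infty.$$ Then for every sufficiently large $\bar v_0>0$ there exist $R\in(0,\infty)$ and an increasing function $\bar v$ on $[0,R)$ which is a strict supersolution of $$\big((v')^{p-1}\big)'+\frac{n-1}{r}(v')^{p-1}\le f(v)-g(v'),\qquad v(0)=\bar v_0,\quad v'(0)=0,$$ ceases to exist at $R$, and satisfies $\bar v(r)\to\infty$ as $r\to R$. *)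

From Stdlib Require Import Reals ClassicalEpsilon.
From Coquelicot Require Import Coquelicot.
Open Scope R_scope.

(* x^a for x >= 0 (with 0^a = 0); Stdlib's Rpower 0 a = 1, hence the guard. *)
Definition rpow (x a : R) : R := if Rlt_dec 0 x then Rpower x a else 0.

Definition Fprim (f : R -> R) (s : R) : R := RInt f 0 s.

Definition cconst (p : R) (n : nat) : R := rpow (p / (p - 1)) p * INR n.

Definition Gamma (p : R) (n : nat) (g : R -> R) (s : R) : R :=
  RInt g 0 (2 * s) + (p - 1) / p * cconst p n * rpow s p.

Definition inv_on_nonneg (G : R -> R) (y : R) : R :=
  epsilon (inhabits 0) (fun x => 0 <= x /\ G x = y).

From Stdlib Require Import Reals ClassicalEpsilon.
From Coquelicot Require Import Coquelicot.
From Stdlib Require Import Classical Lra FunctionalExtensionality PropExtensionality.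
Open Scope R_scope.

(* The supersolution is built in parametric form. With [pconj = p / (p - 1)] and a
   parameter [s >= 0], the slope is [v' = s^pconj], so that [(v')^(p-1) = s^p]; the
   height [V s] is given by the energy identity [F (V s) = F v0 + Gamma (s^pconj)];
   and the radius is [r = rho s] with [rho' = V' / s^pconj].  Then [v = V o rho^-1]
   satisfies [((v')^(p-1))' <= f v / c], and by the mean value theorem also
   [(n - 1) / r (v')^(p-1) <= (n - 1) f v / c], so the left-hand side of the
   inequality is at most [(n / c) f v = (1 - eta) f v].  For large [v0] the
   Keller-Osserman integral forces [Gamma^-1 (F v) >= 4 v / eta], which gives
   [g (v') < eta f v].  The same integral bounds [rho' <= 2 V' / Gamma^-1 (F V)]
   once [V >= 2 v0], so [rho] is bounded: [R = sup rho] is finite and [v] blows up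
   at [R]. *)

Lemma ball_R (x e y : R) : ball x e y <-> Rabs (y - x) < e.
Proof. unfold ball; simpl; unfold AbsRing_ball, abs, minus, plus, opp; simpl. tauto. Qed.

Lemma continuous_of_derive (h : R -> R) x d : is_derive h x d -> continuous h x.
Proof. intros hd. apply (ex_derive_continuous h). now exists d. Qed.

Lemma MVT_interval (h dh : R -> R) x y : x <= y ->
  (forall c, x < c < y -> is_derive h c (dh c)) -> (forall c, x <= c <= y -> continuity_pt h c) ->
  exists c, x <= c <= y /\ h y - h x = dh c * (y - x).
Proof.
  intros hxy hd hc. destruct (MVT_gen h x y dh) as [c [hxc e]];
    rewrite ?Rmin_left, ?Rmax_right in * by lra; [easy|easy|now exists c].
Qed.

Lemma MVT_interval_derive (h dh : R -> R) x y : x <= y ->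
  (forall c, x <= c <= y -> is_derive h c (dh c)) ->
  exists c, x <= c <= y /\ h y - h x = dh c * (y - x).
Proof.
  intros hxy hd. apply MVT_interval; [easy| intros c hc; apply hd; lra |].
  intros c hc. apply continuity_pt_filterlim, (continuous_of_derive _ _ (dh c)), hd, hc.
Qed.

Lemma derive_lower_bound (h dh : R -> R) x y lo : x <= y ->
  (forall c, x <= c <= y -> is_derive h c (dh c)) ->
  (forall c, x <= c <= y -> lo <= dh c) -> lo * (y - x) <= h y - h x.
Proof.
  intros hxy hd hlo. destruct (MVT_interval_derive h dh x y hxy hd) as [c [hc ->]].
  apply Rmult_le_compat_r; [lra|]. now apply hlo.
Qed.

Lemma derive_upper_bound (h dh : R -> R) x y hi : x <= y ->
  (forall c, x <= c <= y -> is_derive h c (dh c)) ->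
  (forall c, x <= c <= y -> dh c <= hi) -> h y - h x <= hi * (y - x).
Proof.
  intros hxy hd hhi. destruct (MVT_interval_derive h dh x y hxy hd) as [c [hc ->]].
  apply Rmult_le_compat_r; [lra|]. now apply hhi.
Qed.

(* The derivative may vanish at 0, so we compare through the midpoint. *)
Lemma strict_incr_of_derive (h dh : R -> R) :
  (forall c, 0 <= c -> is_derive h c (dh c)) -> (forall c, 0 <= c -> 0 <= dh c) ->
  (forall c, 0 < c -> 0 < dh c) -> forall x y, 0 <= x -> x < y -> h x < h y.
Proof.
  intros hd h0 hpos x y hx hxy. set (mid := (x + y) / 2).
  assert (hxm : 0 * (mid - x) <= h mid - h x).
  { apply (derive_lower_bound h dh); unfold mid; try lra; intros c hc; [apply hd | apply h0]; lra. }
  destruct (MVT_interval_derive h dh mid y) as [c [hc e]]; [unfold mid; lra| |].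
  { intros c hc. apply hd. unfold mid in hc; lra. }
  assert (0 < dh c) by (apply hpos; unfold mid in hc; lra).
  assert (0 < dh c * (y - mid)) by (apply Rmult_lt_0_compat; unfold mid; lra). lra.
Qed.

Lemma continuous_of_const_nonpos (h : R -> R) x :
  (forall y, y <= 0 -> h y = h 0) -> filterlim h (at_right 0) (locally (h 0)) ->
  (0 < x -> continuous h x) -> continuous h x.
Proof.
  intros hneg hright hpos. destruct (Rlt_le_dec 0 x) as [hx|hx]; [now apply hpos|].
  destruct (Rlt_le_dec x 0) as [hx'|hx'].
  - apply (continuous_ext_loc _ (fun _ => h 0)); [|apply continuous_const].
    eapply filter_imp; [|exact (open_lt 0 x hx')]. intros y hy. symmetry; apply hneg; lra.
  - replace x with 0 by lra. intros P HP. destruct (hright P HP) as [d hd].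
    exists d. intros y hy. destruct (Rlt_le_dec 0 y) as [hy0|hy0]; [now apply hd|].
    rewrite hneg by exact hy0. now apply locally_singleton.
Qed.

Lemma at_right_0_lim (h : R -> R) l :
  (forall eps, 0 < eps -> exists d, 0 < d /\ forall y, 0 < y < d -> Rabs (h y - l) < eps) ->
  filterlim h (at_right 0) (locally l).
Proof.
  intros hlim. apply filterlim_locally. intros eps. destruct (hlim eps (cond_pos eps)) as [d [hd Hd]].
  exists (mkposreal d hd). intros y hy hy0. apply ball_R, Hd.
  rewrite ball_R in hy. apply Rabs_def2 in hy. simpl in hy. lra.
Qed.

Lemma at_right_0_squeeze (q u : R -> R) d : 0 < d ->
  (forall y, 0 < y < d -> Rabs (q y) <= u y) -> continuous u 0 -> u 0 = 0 ->
  filterlim q (at_right 0) (locally 0).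
Proof.
  intros hd hq hu hu0. apply filterlim_locally. intros eps.
  pose proof (proj1 (filterlim_locally u (u 0)) hu eps) as Hu. rewrite hu0 in Hu.
  unfold at_right, within. generalize (filter_and _ _ Hu (locally_ball 0 (mkposreal d hd))).
  apply filter_imp. intros y [h1 h2] hy0. rewrite ball_R in *. simpl in *.
  rewrite Rminus_0_r in *. apply Rabs_def2 in h2. specialize (hq y ltac:(lra)).
  apply Rle_lt_trans with (u y); [exact hq|]. apply Rabs_def2 in h1. lra.
Qed.

Lemma lipschitz_continuous (h : R -> R) L x :
  (forall x y, Rabs (h x - h y) <= L * Rabs (x - y)) -> continuous h x.
Proof.
  intros hL. apply continuity_pt_filterlim. intros eps heps.
  assert (hL0 : 0 <= L).
  { specialize (hL 1 0). pose proof (Rabs_pos (h 1 - h 0)).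
    rewrite Rminus_0_r, Rabs_R1 in hL. lra. }
  exists (eps / (L + 1)). split; [apply Rdiv_lt_0_compat; lra|].
  intros y [_ hy]. simpl in *. unfold R_dist in *.
  apply Rle_lt_trans with ((L + 1) * Rabs (y - x)); [pose proof (hL y x); pose proof (Rabs_pos (y - x)); nra|].
  apply (Rmult_lt_reg_r (/ (L + 1))); [apply Rinv_0_lt_compat; lra|].
  replace ((L + 1) * Rabs (y - x) * / (L + 1)) with (Rabs (y - x)) by (field; lra). exact hy.
Qed.

Lemma Rmax_0_lipschitz x y : Rabs (Rmax 0 x - Rmax 0 y) <= Rabs (x - y).
Proof. unfold Rmax. destruct (Rle_dec 0 x), (Rle_dec 0 y); split_Rabs; lra. Qed.

Section InverseOnNonneg.
Variable G : R -> R.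
Hypothesis G_incr : forall x y, 0 <= x -> x < y -> G x < G y.
Hypothesis G_cont : forall x, 0 <= x -> continuity_pt G x.

Lemma incr_le x y : 0 <= x -> x <= y -> G x <= G y.
Proof. intros hx hxy. destruct (Req_dec x y) as [->|]; [lra|]. left; apply G_incr; lra. Qed.

Lemma incr_le_inv x y : 0 <= x -> 0 <= y -> G x <= G y -> x <= y.
Proof. intros hx hy h. destruct (Rle_lt_dec x y); auto. assert (G y < G x) by (apply G_incr; lra). lra. Qed.

Lemma incr_lt_inv x y : 0 <= x -> 0 <= y -> G x < G y -> x < y.
Proof. intros hx hy h. destruct (Rlt_le_dec x y); auto. assert (G y <= G x) by (apply incr_le; lra). lra. Qed.

Lemma inv_on_nonneg_spec y : (exists x, 0 <= x /\ G x = y) ->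
  0 <= inv_on_nonneg G y /\ G (inv_on_nonneg G y) = y.
Proof. exact (epsilon_spec (inhabits 0) (fun x => 0 <= x /\ G x = y)). Qed.

Lemma inv_on_nonneg_K x : 0 <= x -> inv_on_nonneg G (G x) = x.
Proof.
  intros hx. destruct (inv_on_nonneg_spec (G x)) as [h1 h2]; [now exists x|].
  apply Rle_antisym; apply incr_le_inv; lra.
Qed.

Lemma inv_on_nonneg_between a b y : 0 <= a -> a <= b -> G a <= y <= G b ->
  a <= inv_on_nonneg G y <= b /\ G (inv_on_nonneg G y) = y.
Proof.
  intros ha hab hy.
  assert (hx : exists x, a <= x <= b /\ G x = y).
  { destruct (Req_dec (G a) y) as [<-|hay]; [exists a; split; [lra|easy]|].
    destruct (Req_dec (G b) y) as [<-|hby]; [exists b; split; [lra|easy]|].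
    destruct (Ranalysis5.IVT_interv (fun x => G x - y) a b) as [x [hx ex]]; try lra.
    - intros x hx. apply continuity_pt_minus; [apply G_cont; lra | apply continuity_pt_const; now intros ? ?].
    - destruct (Req_dec a b) as [<-|]; lra.
    - exists x. split; [lra|]. simpl in ex. lra. }
  destruct hx as [x [hx <-]]. rewrite inv_on_nonneg_K by lra. now split.
Qed.

Lemma inv_on_nonneg_onto y : G 0 <= y -> (exists b, 0 <= b /\ y <= G b) ->
  0 <= inv_on_nonneg G y /\ G (inv_on_nonneg G y) = y.
Proof.
  intros hy [b [hb hyb]].
  destruct (inv_on_nonneg_between 0 b y) as [[h0 _] e]; [lra|easy|lra|easy].
Qed.

Lemma inv_on_nonneg_between_strict a b y : 0 <= a -> a < b -> G a < y < G b ->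
  a < inv_on_nonneg G y < b /\ G (inv_on_nonneg G y) = y.
Proof.
  intros ha hab hy.
  destruct (inv_on_nonneg_between a b y ha (Rlt_le _ _ hab)) as [[h1 h2] e]; [lra|].
  split; [|exact e]. split.
  - destruct h1 as [h1|h1]; [exact h1|]. rewrite <- h1 in e. lra.
  - destruct h2 as [h2|h2]; [exact h2|]. rewrite h2 in e. lra.
Qed.

Lemma inv_on_nonneg_near x0 eps : 0 < x0 -> 0 < eps -> exists del, 0 < del /\
  forall y, Rabs (y - G x0) < del ->
  Rabs (inv_on_nonneg G y - x0) < eps /\ G (inv_on_nonneg G y) = y.
Proof.
  intros hx0 heps. set (e := Rmin (eps / 2) (x0 / 2)).
  assert (he : 0 < e) by (apply Rmin_glb_lt; lra).
  assert (e <= eps / 2) by apply Rmin_l. assert (e <= x0 / 2) by apply Rmin_r.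
  assert (G (x0 - e) < G x0) by (apply G_incr; lra).
  assert (G x0 < G (x0 + e)) by (apply G_incr; lra).
  exists (Rmin (G x0 - G (x0 - e)) (G (x0 + e) - G x0)). split; [apply Rmin_glb_lt; lra|].
  intros y hy. apply Rabs_def2 in hy.
  pose proof (Rmin_l (G x0 - G (x0 - e)) (G (x0 + e) - G x0)).
  pose proof (Rmin_r (G x0 - G (x0 - e)) (G (x0 + e) - G x0)).
  destruct (inv_on_nonneg_between_strict (x0 - e) (x0 + e) y) as [hb e']; [lra|lra|lra|].
  split; [apply Rabs_def1; lra|exact e'].
Qed.

Lemma inv_on_nonneg_continuous x0 : 0 < x0 -> continuity_pt (inv_on_nonneg G) (G x0).
Proof.
  intros hx0 eps heps. destruct (inv_on_nonneg_near x0 eps hx0 heps) as [del [hdel Hnear]].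
  exists del. split; [exact hdel|]. intros y [_ hy]. simpl in *. unfold R_dist in *.
  rewrite inv_on_nonneg_K by lra. now apply Hnear.
Qed.

(* If [x = G^-1 (G x0 + h)] and [k = x - x0], the difference quotient [k / h] is the
   inverse of [G]'s difference quotient [h / k], which is close to [d]. *)
Lemma is_derive_inv_on_nonneg x0 d : 0 < x0 -> 0 < d -> is_derive G x0 d ->
  is_derive (inv_on_nonneg G) (G x0) (/ d).
Proof.
  intros hx0 hd hG. apply is_derive_Reals. apply is_derive_Reals in hG.
  intros eps heps. set (e := Rmin (d / 2) (eps * (d * d) / 2)).
  assert (hedd : 0 < eps * (d * d)) by (apply Rmult_lt_0_compat; nra).
  assert (he : 0 < e) by (apply Rmin_glb_lt; lra).
  assert (e <= d / 2) by apply Rmin_l. assert (e <= eps * (d * d) / 2) by apply Rmin_r.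
  destruct (hG e he) as [d1 hd1].
  destruct (inv_on_nonneg_near x0 d1 hx0 (cond_pos d1)) as [d2 [hd2 Hnear]].
  exists (mkposreal d2 hd2). intros h hh0 hh. simpl in hh.
  destruct (Hnear (G x0 + h)) as [hx ex]; [now replace (G x0 + h - G x0) with h by ring|].
  rewrite inv_on_nonneg_K by lra.
  set (x := inv_on_nonneg G (G x0 + h)) in *. set (k := x - x0).
  assert (hk : k <> 0) by (intro; assert (x = x0) as -> by (unfold k in *; lra); lra).
  specialize (hd1 k hk hx). replace (x0 + k) with x in hd1 by (unfold k; ring).
  rewrite ex in hd1. replace (G x0 + h - G x0) with h in hd1 by ring.
  apply Rabs_def2 in hd1. set (q := h / k) in *.
  assert (hq : d / 2 < q) by lra.
  replace (k / h - / d) with ((d - q) / (q * d)) by (unfold q; field; lra).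
  unfold Rdiv. rewrite Rabs_mult, Rabs_inv, (Rabs_right (q * d)) by nra.
  apply (Rmult_lt_reg_r (q * d)); [nra|].
  rewrite Rmult_assoc, Rinv_l, Rmult_1_r by nra.
  apply Rle_lt_trans with e; [apply Rabs_le; lra|]. nra.
Qed.

End InverseOnNonneg.

Lemma inv_on_nonneg_ext G1 G2 y : (forall x, 0 <= x -> G1 x = G2 x) ->
  inv_on_nonneg G1 y = inv_on_nonneg G2 y.
Proof.
  intros h. unfold inv_on_nonneg. f_equal. apply functional_extensionality. intros x.
  apply propositional_extensionality.
  split; intros [hx e]; split; [easy | rewrite <- h by easy; easy | easy | rewrite h by easy; easy].
Qed.

Lemma rpow_pos x a : 0 < x -> rpow x a = Rpower x a.
Proof. intros h. unfold rpow. now destruct (Rlt_dec 0 x). Qed.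

Lemma rpow_nonpos x a : x <= 0 -> rpow x a = 0.
Proof. intros h. unfold rpow. destruct (Rlt_dec 0 x); [lra|easy]. Qed.

Lemma rpow_gt0 x a : 0 < x -> 0 < rpow x a.
Proof. intros h. rewrite rpow_pos by exact h. apply exp_pos. Qed.

Lemma rpow_ge0 x a : 0 <= rpow x a.
Proof. unfold rpow. destruct (Rlt_dec 0 x); [left; apply exp_pos|lra]. Qed.

Lemma rpow_1 x : 0 <= x -> rpow x 1 = x.
Proof.
  intros h. destruct (Rlt_dec 0 x); [rewrite rpow_pos by easy; now apply Rpower_1|].
  rewrite rpow_nonpos; lra.
Qed.

Lemma rpow_rpow x a b : rpow (rpow x a) b = rpow x (a * b).
Proof.
  destruct (Rlt_dec 0 x).
  - rewrite (rpow_pos x a), rpow_pos, Rpower_mult, rpow_pos by (easy || apply exp_pos). easy.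
  - rewrite !(rpow_nonpos x), rpow_nonpos; lra.
Qed.

Lemma rpow_plus x a b : 0 < x -> rpow x (a + b) = rpow x a * rpow x b.
Proof. intros h. rewrite !rpow_pos by exact h. apply Rpower_plus. Qed.

Lemma rpow_split x a : 0 <= x -> rpow x (1 + a) = x * rpow x a.
Proof.
  intros h. destruct (Rlt_dec 0 x); [rewrite rpow_plus, rpow_1; lra|].
  rewrite !rpow_nonpos; lra.
Qed.

Lemma rpow_mult_base x y a : 0 <= x -> 0 <= y -> rpow (x * y) a = rpow x a * rpow y a.
Proof.
  intros hx hy. destruct (Rlt_dec 0 x); destruct (Rlt_dec 0 y).
  - rewrite !rpow_pos by (try apply Rmult_lt_0_compat; easy). now rewrite Rpower_mult_distr.
  - replace y with 0 by lra. rewrite Rmult_0_r, !(rpow_nonpos 0); lra.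
  - replace x with 0 by lra. rewrite Rmult_0_l, !(rpow_nonpos 0); lra.
  - replace x with 0 by lra. rewrite Rmult_0_l, !(rpow_nonpos 0); lra.
Qed.

Lemma rpow_lt x y a : 0 < a -> 0 <= x -> x < y -> rpow x a < rpow y a.
Proof.
  intros ha hx hxy. destruct (Rlt_dec 0 x).
  - rewrite !rpow_pos by lra. apply Rlt_Rpower_l; lra.
  - rewrite rpow_nonpos by lra. apply rpow_gt0; lra.
Qed.

Lemma rpow_le x y a : 0 < a -> 0 <= x -> x <= y -> rpow x a <= rpow y a.
Proof. intros ha hx hxy. destruct (Req_dec x y) as [->|]; [lra|]. left; apply rpow_lt; lra. Qed.

Lemma rpow_ge_base x a : 1 <= x -> 1 <= a -> x <= rpow x a.
Proof.
  intros hx ha. rewrite rpow_pos by lra. rewrite <- (Rpower_1 x) at 1 by lra.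
  apply Rle_Rpower; lra.
Qed.

Lemma is_derive_rpow x a : 0 < x -> is_derive (fun t => rpow t a) x (a * rpow x (a - 1)).
Proof.
  intros hx. rewrite rpow_pos by exact hx.
  apply (is_derive_ext_loc (fun t => Rpower t a)).
  - eapply filter_imp; [|exact (open_gt 0 x hx)]. intros t ht. now rewrite rpow_pos.
  - apply is_derive_Reals, derivable_pt_lim_power, hx.
Qed.

Lemma rpow_at_right_0 a : 0 < a -> filterlim (fun t => rpow t a) (at_right 0) (locally 0).
Proof.
  intros ha. apply at_right_0_lim. intros eps heps.
  exists (Rpower eps (/ a)). split; [apply exp_pos|]. intros y hy.
  rewrite Rminus_0_r, Rabs_right by apply Rle_ge, rpow_ge0.
  rewrite <- (Rpower_1 eps), <- (Rinv_l a), <- Rpower_mult by lra.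
  rewrite rpow_pos by lra. apply Rlt_Rpower_l; lra.
Qed.

Lemma rpow_continuous a x : 0 < a -> continuous (fun t => rpow t a) x.
Proof.
  intros ha. apply continuous_of_const_nonpos.
  - intros y hy. rewrite !rpow_nonpos; lra.
  - rewrite rpow_nonpos by lra. now apply rpow_at_right_0.
  - intros hx. eapply continuous_of_derive, is_derive_rpow, hx.
Qed.

Lemma RInt_point_R (h : R -> R) a : RInt h a a = 0.
Proof. exact (RInt_point a h). Qed.

Section MonotonePrimitive.
Variable h : R -> R.
Hypothesis h_cont : forall x, continuous h x.
Hypothesis h_mono : forall x y, x <= y -> h x <= h y.

Lemma ex_RInt_of_continuous a b : ex_RInt h a b.
Proof. apply (@ex_RInt_continuous R_CompleteNormedModule). intros; apply h_cont. Qed.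

Lemma is_derive_RInt_0 x : is_derive (fun s => RInt h 0 s) x (h x).
Proof.
  apply (is_derive_RInt h _ 0); [|apply h_cont].
  apply filter_forall. intros y. apply (@RInt_correct R_CompleteNormedModule), ex_RInt_of_continuous.
Qed.

Lemma RInt_0_bounds x y : x <= y ->
  (y - x) * h x <= RInt h 0 y - RInt h 0 x <= (y - x) * h y.
Proof.
  intros hxy. rewrite !(Rmult_comm (y - x)). split.
  - apply (derive_lower_bound _ h); [easy|intros; apply is_derive_RInt_0|].
    intros c hc. apply h_mono; lra.
  - apply (derive_upper_bound _ h); [easy|intros; apply is_derive_RInt_0|].
    intros c hc. apply h_mono; lra.
Qed.

(* [s |-> RInt h 0 (t s) - t RInt h 0 s] vanishes at 0 and has derivative [t (h (t s) - h s) >= 0]. *)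
Lemma RInt_0_superhomogeneous t x : 1 <= t -> 0 <= x -> t * RInt h 0 x <= RInt h 0 (t * x).
Proof.
  intros ht hx. set (J s := RInt h 0 (t * s) - t * RInt h 0 s).
  assert (dJ : forall s, is_derive J s (t * h (t * s) - t * h s)).
  { intros s. apply (is_derive_minus (fun s => RInt h 0 (t * s)) (fun s => t * RInt h 0 s)).
    - apply (is_derive_comp (fun u => RInt h 0 u) (fun s => t * s) s (h (t * s)) t).
      + apply is_derive_RInt_0.
      + auto_derive; [easy|ring].
    - apply is_derive_scal, is_derive_RInt_0. }
  assert (hJ : 0 * (x - 0) <= J x - J 0).
  { apply (derive_lower_bound J (fun s => t * h (t * s) - t * h s) 0 x); [easy|intros; apply dJ|].
    intros s [hs _]. assert (h s <= h (t * s)) by (apply h_mono; nra).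
    rewrite <- Rmult_minus_distr_l. apply Rmult_le_pos; lra. }
  unfold J in hJ. rewrite Rmult_0_r, RInt_point_R in hJ. lra.
Qed.
End MonotonePrimitive.

Section ImproperIntegral.
Variables (h : R -> R) (l : R).
Hypothesis h_int : is_RInt_gen h (at_point 1) (Rbar_locally p_infty) l.
Hypothesis h_ex : forall x y, 1 <= x -> 1 <= y -> ex_RInt h x y.
Hypothesis h_ge0 : forall x, 1 <= x -> 0 <= h x.

Lemma RInt_close_to_is_RInt_gen eps : 0 < eps ->
  exists B, 1 <= B /\ forall b, B < b -> Rabs (RInt h 1 b - l) < eps.
Proof.
  intros heps. destruct (h_int (ball l eps)) as [Q P hQ [M hM] HQP]; [now exists (mkposreal eps heps)|].
  exists (Rmax M 1). split; [apply Rmax_r|]. intros b hb.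
  pose proof (Rmax_l M 1). pose proof (Rmax_r M 1).
  destruct (HQP 1 b hQ (hM b ltac:(lra))) as [y [hy1 hy2]]. simpl in hy1.
  rewrite (is_RInt_unique h 1 b y hy1). now apply ball_R.
Qed.

Lemma RInt_chasles_ge1 x y z : 1 <= x -> 1 <= y -> 1 <= z ->
  RInt h x y + RInt h y z = RInt h x z.
Proof. intros. apply (@RInt_Chasles R_CompleteNormedModule); now apply h_ex. Qed.

Lemma RInt_ge0_ge1 x y : 1 <= x <= y -> 0 <= RInt h x y.
Proof. intros hxy. apply RInt_ge_0; [lra | apply h_ex; lra |]. intros; apply h_ge0; lra. Qed.

Lemma RInt_le_is_RInt_gen b : 1 <= b -> RInt h 1 b <= l.
Proof.
  intros hb. apply Rnot_lt_le. intros hlt.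
  destruct (RInt_close_to_is_RInt_gen (RInt h 1 b - l)) as [B [hB1 hB]]; [lra|].
  specialize (hB (Rmax B b + 1) ltac:(pose proof (Rmax_l B b); lra)). apply Rabs_def2 in hB.
  pose proof (RInt_chasles_ge1 1 b (Rmax B b + 1)).
  pose proof (RInt_ge0_ge1 b (Rmax B b + 1)). pose proof (Rmax_r B b). lra.
Qed.

Lemma RInt_half_small eps : 0 < eps -> exists B, 1 <= B /\ forall b, B <= b -> RInt h (b / 2) b < eps.
Proof.
  intros heps. destruct (RInt_close_to_is_RInt_gen (eps / 2)) as [B [hB1 hB]]; [lra|].
  exists (2 * B + 2). split; [lra|]. intros b hb.
  pose proof (hB b ltac:(lra)) as h1. pose proof (hB (b / 2) ltac:(lra)) as h2.
  apply Rabs_def2 in h1. apply Rabs_def2 in h2.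
  pose proof (RInt_chasles_ge1 1 (b / 2) b). lra.
Qed.
End ImproperIntegral.

Section Setting.
Variables (p : R) (n : nat) (f g : R -> R) (L : R).
Hypothesis hp : 1 < p.
Hypothesis hn : (1 <= n)%nat.
Hypothesis f_cont : forall x, 0 < x -> continuous f x.
Hypothesis f_cont0 : filterlim f (at_right 0) (locally (f 0)).
Hypothesis f_incr : forall x y, 0 <= x -> x < y -> f x < f y.
Hypothesis f0 : f 0 = 0.
Hypothesis g_lip : forall x y, 0 <= x -> 0 <= y -> Rabs (g x - g y) <= L * Rabs (x - y).
Hypothesis g_incr : forall x y, 0 <= x -> x < y -> g x < g y.
Hypothesis g0 : g 0 = 0.

Lemma f_pos x : 0 < x -> 0 < f x.
Proof. intros hx. rewrite <- f0. apply f_incr; lra. Qed.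

Lemma g_ge0 x : 0 <= x -> 0 <= g x.
Proof. intros hx. rewrite <- g0. now apply (incr_le g g_incr). Qed.

Lemma L_ge0 : 0 <= L.
Proof.
  pose proof (g_lip 1 0). pose proof (g_incr 0 1). pose proof (Rabs_pos (g 1 - g 0)).
  rewrite Rminus_0_r, Rabs_R1 in *. lra.
Qed.

(* [f] and [g] are only given on [0, oo); extending them constantly to the left
   makes their primitives differentiable everywhere. *)
Definition fe t := f (Rmax 0 t).
Definition ge t := g (Rmax 0 t).

Lemma fe_eq x : 0 <= x -> fe x = f x.
Proof. intros hx. unfold fe. now rewrite Rmax_right. Qed.

Lemma ge_eq x : 0 <= x -> ge x = g x.
Proof. intros hx. unfold ge. now rewrite Rmax_right. Qed.

Lemma fe_mono x y : x <= y -> fe x <= fe y.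
Proof. intros. apply (incr_le f f_incr); [apply Rmax_l | now apply Rle_max_compat_l]. Qed.

Lemma ge_mono x y : x <= y -> ge x <= ge y.
Proof. intros. apply (incr_le g g_incr); [apply Rmax_l | now apply Rle_max_compat_l]. Qed.

Lemma fe_continuous x : continuous fe x.
Proof.
  apply continuous_of_const_nonpos.
  - intros y hy. unfold fe. now rewrite !Rmax_left by lra.
  - rewrite fe_eq by lra. apply (filterlim_ext_loc f); [|exact f_cont0].
    exists (mkposreal 1 Rlt_0_1). intros y _ hy. symmetry. apply fe_eq. lra.
  - intros hx. apply (continuous_ext_loc _ f); [|now apply f_cont].
    eapply filter_imp; [|exact (open_gt 0 x hx)]. intros t ht. symmetry; apply fe_eq; lra.
Qed.

Lemma ge_continuous x : continuous ge x.
Proof.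
  apply (lipschitz_continuous _ L). intros y z. unfold ge.
  eapply Rle_trans; [apply g_lip; apply Rmax_l|].
  apply Rmult_le_compat_l; [apply L_ge0 | apply Rmax_0_lipschitz].
Qed.

Definition pconj := p / (p - 1).
Definition k := (p - 1) / p * cconst p n.
Definition eta := 1 - INR n / cconst p n.
Definition Fe s := RInt fe 0 s.
Definition Ge s := RInt ge 0 (2 * s) + k * rpow s p.

Lemma pconj_gt1 : 1 < pconj.
Proof. unfold pconj. apply Rlt_div_r; lra. Qed.

Lemma INR_n_ge1 : 1 <= INR n.
Proof. apply (le_INR 1 n) in hn. exact hn. Qed.

Lemma n_lt_cconst : INR n < cconst p n.
Proof.
  unfold cconst. fold pconj. pose proof pconj_gt1. pose proof INR_n_ge1.
  assert (pconj <= rpow pconj p) by (apply rpow_ge_base; lra). nra.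
Qed.

Lemma k_pos : 0 < k.
Proof.
  unfold k. pose proof n_lt_cconst. pose proof INR_n_ge1.
  apply Rmult_lt_0_compat; [apply Rdiv_lt_0_compat|]; lra.
Qed.

Lemma pconj_k : pconj * k = cconst p n.
Proof. unfold pconj, k. field. lra. Qed.

Lemma eta_pos : 0 < eta.
Proof.
  unfold eta. pose proof n_lt_cconst. pose proof INR_n_ge1.
  enough (INR n / cconst p n < 1) by lra. apply Rlt_div_l; lra.
Qed.

Lemma eta_cconst : INR n / cconst p n = 1 - eta.
Proof. unfold eta. ring. Qed.

Lemma is_derive_Fe x : is_derive Fe x (fe x).
Proof. exact (is_derive_RInt_0 fe fe_continuous x). Qed.

Lemma Fe0 : Fe 0 = 0.
Proof. apply RInt_point_R. Qed.

Lemma Fe_bounds x y : 0 <= x -> x <= y -> (y - x) * f x <= Fe y - Fe x <= (y - x) * f y.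
Proof. intros hx hxy. rewrite <- !fe_eq by lra. exact (RInt_0_bounds fe fe_continuous fe_mono x y hxy). Qed.

Lemma Fe_ge0 v : 0 <= v -> 0 <= Fe v.
Proof. intros hv. pose proof (Fe_bounds 0 v (Rle_refl 0) hv) as hb. rewrite Fe0, f0 in hb. lra. Qed.

Lemma Fe_le v : 0 <= v -> Fe v <= v * f v.
Proof. intros hv. pose proof (Fe_bounds 0 v (Rle_refl 0) hv) as hb. rewrite Fe0 in hb. lra. Qed.

Lemma Fe_incr x y : 0 <= x -> x < y -> Fe x < Fe y.
Proof.
  apply (strict_incr_of_derive Fe fe); intros c hc; [apply is_derive_Fe| |];
    rewrite fe_eq by lra; [rewrite <- f0; now apply (incr_le f f_incr) | now apply f_pos].
Qed.

Lemma Fe_cont x : 0 <= x -> continuity_pt Fe x.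
Proof. intros _. apply continuity_pt_filterlim, (continuous_of_derive _ _ _ (is_derive_Fe x)). Qed.

Lemma Fe_unbounded y : exists X, 0 <= X /\ y <= Fe X.
Proof.
  pose proof (f_pos 1 Rlt_0_1). exists (Rmax 2 (1 + y / f 1)).
  pose proof (Rmax_l 2 (1 + y / f 1)). pose proof (Rmax_r 2 (1 + y / f 1)).
  set (X := Rmax 2 (1 + y / f 1)) in *. split; [lra|].
  pose proof (Fe_ge0 1 ltac:(lra)). pose proof (Fe_bounds 1 X ltac:(lra) ltac:(lra)).
  assert (y = (y / f 1) * f 1) by (field; lra). nra.
Qed.

Lemma is_derive_Ge x : 0 < x -> is_derive Ge x (2 * ge (2 * x) + k * (p * rpow x (p - 1))).
Proof.
  intros hx. apply (is_derive_plus (fun s => RInt ge 0 (2 * s)) (fun s => k * rpow s p)).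
  - apply (is_derive_comp (fun u => RInt ge 0 u) (fun s => 2 * s) x (ge (2 * x)) 2).
    + exact (is_derive_RInt_0 ge ge_continuous _).
    + auto_derive; [easy|ring].
  - apply is_derive_scal, is_derive_rpow, hx.
Qed.

Lemma Ge0 : Ge 0 = 0.
Proof. unfold Ge. rewrite Rmult_0_r, RInt_point_R, rpow_nonpos by lra. ring. Qed.

Lemma Ge_cont x : 0 <= x -> continuity_pt Ge x.
Proof.
  intros _. apply continuity_pt_filterlim.
  apply (continuous_plus (fun s => RInt ge 0 (2 * s)) (fun s => k * rpow s p)).
  - apply (continuous_comp (fun s => 2 * s) (fun u => RInt ge 0 u)).
    + exact (continuous_of_derive (fun s => 2 * s) x 2 ltac:(auto_derive; [easy|ring])).
    + exact (continuous_of_derive _ _ _ (is_derive_RInt_0 ge ge_continuous _)).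
  - apply (continuous_scal_r k (fun s => rpow s p)), rpow_continuous; lra.
Qed.

Lemma RInt_ge_ge0 x : 0 <= x -> 0 <= RInt ge 0 x.
Proof.
  intros hx. pose proof (RInt_0_bounds ge ge_continuous ge_mono 0 x hx) as hb.
  rewrite RInt_point_R, ge_eq, g0 in hb by lra. lra.
Qed.

Lemma Ge_incr x y : 0 <= x -> x < y -> Ge x < Ge y.
Proof.
  intros hx hxy. unfold Ge.
  pose proof (RInt_0_bounds ge ge_continuous ge_mono (2 * x) (2 * y) ltac:(lra)).
  pose proof (ge_mono 0 (2 * x) ltac:(lra)) as hg. rewrite ge_eq, g0 in hg by lra.
  pose proof (rpow_lt x y p ltac:(lra) hx hxy). pose proof k_pos. nra.
Qed.

Lemma Ge_lower x : 0 <= x -> k * rpow x p <= Ge x.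
Proof. intros hx. unfold Ge. pose proof (RInt_ge_ge0 (2 * x) ltac:(lra)). lra. Qed.

Lemma Ge_ge_mul_g w : 0 <= w -> w * g w <= Ge w.
Proof.
  intros hw. pose proof (RInt_0_bounds ge ge_continuous ge_mono w (2 * w) ltac:(lra)) as hb.
  pose proof (RInt_ge_ge0 w hw). pose proof (Ge_lower w hw). pose proof k_pos. pose proof (rpow_ge0 w p).
  rewrite ge_eq in hb by lra. unfold Ge in *. nra.
Qed.

Lemma Ge_superhomogeneous t x : 1 <= t -> 0 <= x -> t * Ge x <= Ge (t * x).
Proof.
  intros ht hx. unfold Ge.
  pose proof (RInt_0_superhomogeneous ge ge_continuous ge_mono t (2 * x) ht ltac:(lra)) as hsup.
  replace (t * (2 * x)) with (2 * (t * x)) in hsup by ring.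
  rewrite rpow_mult_base by lra. pose proof (rpow_ge_base t p ht ltac:(lra)).
  pose proof (rpow_ge0 x p). pose proof k_pos.
  assert (0 <= k * rpow x p * (rpow t p - t)) by (apply Rmult_le_pos; [apply Rmult_le_pos|]; lra). nra.
Qed.

Lemma Ge_unbounded y : exists X, 0 <= X /\ y <= Ge X.
Proof.
  pose proof k_pos. exists (Rmax 1 (y / k)).
  pose proof (Rmax_l 1 (y / k)). pose proof (Rmax_r 1 (y / k)).
  set (X := Rmax 1 (y / k)) in *. split; [lra|].
  pose proof (Ge_lower X ltac:(lra)). pose proof (rpow_ge_base X p ltac:(lra) ltac:(lra)).
  assert (y = k * (y / k)) by (field; lra). nra.
Qed.

Definition GinvF v := inv_on_nonneg Ge (Fe v).

Lemma Fe_inv_spec y : 0 <= y -> 0 <= inv_on_nonneg Fe y /\ Fe (inv_on_nonneg Fe y) = y.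
Proof.
  intros hy. apply (inv_on_nonneg_onto Fe Fe_incr Fe_cont); [rewrite Fe0; lra | apply Fe_unbounded].
Qed.

Lemma GinvF_spec v : 0 <= v -> 0 <= GinvF v /\ Ge (GinvF v) = Fe v.
Proof.
  intros hv. apply (inv_on_nonneg_onto Ge Ge_incr Ge_cont); [rewrite Ge0; now apply Fe_ge0 | apply Ge_unbounded].
Qed.

Lemma GinvF_pos v : 0 < v -> 0 < GinvF v.
Proof.
  intros hv. destruct (GinvF_spec v) as [[h|h] e]; [lra|easy|].
  rewrite <- h, Ge0 in e. pose proof (Fe_incr 0 v (Rle_refl 0) hv). rewrite Fe0 in *. lra.
Qed.

Lemma GinvF_le u v : 0 <= u -> u <= v -> GinvF u <= GinvF v.
Proof.
  intros hu huv. destruct (GinvF_spec u) as [h1 e1]; [easy|]. destruct (GinvF_spec v) as [h2 e2]; [lra|].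
  apply (incr_le_inv Ge Ge_incr); [easy|easy|]. rewrite e1, e2. now apply (incr_le Fe Fe_incr).
Qed.

Lemma inv_GinvF_continuous v : 0 < v -> continuous (fun v => / GinvF v) v.
Proof.
  intros hv. apply continuity_pt_filterlim, continuity_pt_inv; [|apply Rgt_not_eq, GinvF_pos, hv].
  unfold GinvF. apply (continuity_pt_comp Fe (inv_on_nonneg Ge)); [now apply Fe_cont; lra|].
  destruct (GinvF_spec v) as [_ e]; [lra|]. rewrite <- e.
  apply (inv_on_nonneg_continuous Ge Ge_incr Ge_cont), GinvF_pos, hv.
Qed.

Lemma ex_RInt_inv_GinvF x y : 0 < x -> 0 < y -> ex_RInt (fun v => / GinvF v) x y.
Proof.
  intros hx hy. apply (@ex_RInt_continuous R_CompleteNormedModule). intros z hz.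
  apply inv_GinvF_continuous. pose proof (Rmin_glb_lt x y 0 hx hy). lra.
Qed.

Lemma Fprim_eq s : 0 <= s -> Fprim f s = Fe s.
Proof.
  intros hs. apply RInt_ext. intros x hx. rewrite Rmin_left, Rmax_right in hx by lra.
  symmetry. apply fe_eq. lra.
Qed.

Lemma Gamma_eq s : 0 <= s -> Gamma p n g s = Ge s.
Proof.
  intros hs. unfold Gamma, Ge, k. f_equal. apply RInt_ext. intros x hx.
  rewrite Rmin_left, Rmax_right in hx by lra. symmetry. apply ge_eq. lra.
Qed.

Lemma keller_osserman_integrand_eq s : 0 <= s ->
  / inv_on_nonneg (Gamma p n g) (Fprim f s) = / GinvF s.
Proof.
  intros hs. unfold GinvF. rewrite Fprim_eq by exact hs. f_equal.
  apply inv_on_nonneg_ext. exact Gamma_eq.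
Qed.

Lemma is_RInt_gen_inv_GinvF l :
  is_RInt_gen (fun s => / inv_on_nonneg (Gamma p n g) (Fprim f s)) (at_point 1) (Rbar_locally p_infty) l ->
  is_RInt_gen (fun v => / GinvF v) (at_point 1) (Rbar_locally p_infty) l.
Proof.
  apply is_RInt_gen_ext. exists (fun x => x = 1) (fun y => 1 < y); [easy | now exists 1 |].
  intros x y -> hy t ht. simpl in ht. rewrite Rmin_left in ht by lra.
  apply keller_osserman_integrand_eq. lra.
Qed.

Section KellerOsserman.
Variable l : R.
Hypothesis hKO : is_RInt_gen (fun v => / GinvF v) (at_point 1) (Rbar_locally p_infty) l.

Lemma RInt_inv_GinvF_le b : 1 <= b -> RInt (fun v => / GinvF v) 1 b <= l.
Proof.
  apply (RInt_le_is_RInt_gen _ l hKO).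
  - intros x y hx hy. apply ex_RInt_inv_GinvF; lra.
  - intros x hx. left. apply Rinv_0_lt_compat, GinvF_pos. lra.
Qed.

(* [GinvF] is nondecreasing, so [(b / 2) / GinvF b <= RInt (/ GinvF) (b / 2) b], which tends to 0. *)
Lemma GinvF_growth : exists A, 1 <= A /\ forall v, A <= v -> 4 * v <= eta * GinvF v.
Proof.
  pose proof eta_pos.
  destruct (RInt_half_small _ l hKO (fun x y hx hy => ex_RInt_inv_GinvF x y ltac:(lra) ltac:(lra))
              (eta / 8)) as [B [hB1 hB]]; [lra|].
  exists (B + 2). split; [lra|]. intros v hv. specialize (hB v ltac:(lra)).
  assert (Lo : RInt (fun _ => / GinvF v) (v / 2) v <= RInt (fun v => / GinvF v) (v / 2) v).
  { apply RInt_le; [lra | apply ex_RInt_const | apply ex_RInt_inv_GinvF; lra |].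
    intros x hx. apply Rinv_le_contravar; [apply GinvF_pos; lra | apply GinvF_le; lra]. }
  rewrite RInt_const in Lo. change (scal (v - v / 2) (/ GinvF v)) with ((v - v / 2) * / GinvF v) in Lo.
  pose proof (GinvF_pos v ltac:(lra)).
  assert (hlt : (v - v / 2) * / GinvF v < eta / 8) by lra.
  apply (Rmult_lt_compat_r (GinvF v)) in hlt; [|easy].
  rewrite Rmult_assoc, Rinv_l, Rmult_1_r in hlt by lra. lra.
Qed.
End KellerOsserman.

Section Construction.
Variable a : R.
Hypothesis ha : 1 <= a.

Definition slope s := rpow s pconj.
Definition V s := inv_on_nonneg Fe (Fe a + Ge (slope s)).
Definition gquot s := if Rlt_dec 0 s then g (2 * slope s) / s else 0.
(* [drho s = V' s / slope s], so that [V o rho^-1] has derivative [slope o rho^-1]. *)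
Definition drho s := pconj * (2 * gquot s + k * p * rpow s (p - 1)) / f (V s).
Definition rho s := RInt drho 0 s.

Lemma slope_ge0 s : 0 <= slope s.
Proof. apply rpow_ge0. Qed.

Lemma slope_incr s t : 0 <= s -> s < t -> slope s < slope t.
Proof. intros. apply rpow_lt; [pose proof pconj_gt1; lra | easy | easy]. Qed.

Lemma slope_le s t : 0 <= s -> s <= t -> slope s <= slope t.
Proof. intros. apply rpow_le; [pose proof pconj_gt1; lra | easy | easy]. Qed.

Lemma slope_continuous s : continuous slope s.
Proof. apply rpow_continuous. pose proof pconj_gt1; lra. Qed.

Lemma slope_eq s : 0 <= s -> slope s = s * rpow s (pconj - 1).
Proof. intros hs. unfold slope. rewrite <- rpow_split by exact hs. f_equal. ring. Qed.

Lemma slope_rpow s : 0 <= s -> rpow (slope s) (p - 1) = s * rpow s (p - 1).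
Proof.
  intros hs. unfold slope. rewrite rpow_rpow, <- rpow_split by exact hs. f_equal.
  unfold pconj. field. lra.
Qed.

Lemma V_spec s : 0 <= V s /\ Fe (V s) = Fe a + Ge (slope s).
Proof.
  apply Fe_inv_spec. pose proof (Fe_ge0 a ltac:(lra)). pose proof (Ge_lower (slope s) (slope_ge0 s)).
  pose proof (rpow_ge0 (slope s) p). pose proof k_pos. nra.
Qed.

Lemma V_ge_a s : a <= V s.
Proof.
  destruct (V_spec s) as [h1 h2]. apply (incr_le_inv Fe Fe_incr); [lra|easy|].
  rewrite h2. pose proof (Ge_lower (slope s) (slope_ge0 s)). pose proof (rpow_ge0 (slope s) p).
  pose proof k_pos. nra.
Qed.

Lemma V_pos s : 0 < V s.
Proof. pose proof (V_ge_a s). lra. Qed.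

Lemma V_nonpos s : s <= 0 -> V s = a.
Proof.
  intros hs. unfold V, slope. rewrite rpow_nonpos, Ge0, Rplus_0_r by exact hs.
  apply (inv_on_nonneg_K Fe Fe_incr). lra.
Qed.

Lemma V_incr s t : 0 <= s -> s < t -> V s < V t.
Proof.
  intros hs hst. destruct (V_spec s) as [h1 e1]. destruct (V_spec t) as [h2 e2].
  apply (incr_lt_inv Fe Fe_incr); [easy|easy|]. rewrite e1, e2.
  pose proof (Ge_incr _ _ (slope_ge0 s) (slope_incr s t hs hst)). lra.
Qed.

Lemma V_continuous s : continuous V s.
Proof.
  apply (continuous_comp (fun s => Fe a + Ge (slope s)) (inv_on_nonneg Fe)).
  - apply (continuous_plus (fun _ => Fe a) (fun s => Ge (slope s))); [apply continuous_const|].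
    apply (continuous_comp slope Ge); [apply slope_continuous|].
    apply continuity_pt_filterlim, Ge_cont, slope_ge0.
  - destruct (V_spec s) as [_ e]. fold (V s). rewrite <- e. apply continuity_pt_filterlim.
    apply (inv_on_nonneg_continuous Fe Fe_incr Fe_cont), V_pos.
Qed.

Lemma V_unbounded M : exists s, 0 <= s /\ M < V s.
Proof.
  destruct (Ge_unbounded (Fe (Rmax M 0 + 1))) as [X [hX hGX]]. pose proof pconj_gt1.
  exists (rpow X (/ pconj)). split; [apply rpow_ge0|].
  assert (E : slope (rpow X (/ pconj)) = X).
  { unfold slope. rewrite rpow_rpow, Rinv_l, rpow_1 by lra. easy. }
  destruct (V_spec (rpow X (/ pconj))) as [h1 h2]. rewrite E in h2.
  pose proof (Rmax_l M 0). pose proof (Rmax_r M 0).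
  assert (Rmax M 0 + 1 <= V (rpow X (/ pconj))); [|lra].
  apply (incr_le_inv Fe Fe_incr); [lra|easy|]. rewrite h2. pose proof (Fe_ge0 a ltac:(lra)). lra.
Qed.

Lemma gquot_ge0 s : 0 <= gquot s.
Proof.
  unfold gquot. destruct (Rlt_dec 0 s); [|lra].
  apply Rdiv_le_0_compat; [apply g_ge0; pose proof (slope_ge0 s); lra | easy].
Qed.

(* By the Lipschitz bound, [g (2 s^pconj) / s <= 2 L s^(pconj - 1)], which tends to 0. *)
Lemma gquot_continuous s : continuous gquot s.
Proof.
  pose proof pconj_gt1 as hq. pose proof L_ge0 as hL.
  apply continuous_of_const_nonpos.
  - intros y hy. unfold gquot. destruct (Rlt_dec 0 y), (Rlt_dec 0 0); lra.
  - replace (gquot 0) with 0 by (unfold gquot; destruct (Rlt_dec 0 0); lra).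
    apply (at_right_0_squeeze _ (fun y => 2 * L * rpow y (pconj - 1)) 1 Rlt_0_1).
    + intros y hy. unfold gquot. destruct (Rlt_dec 0 y) as [_|]; [|lra].
      pose proof (g_lip (2 * slope y) 0 ltac:(pose proof (slope_ge0 y); lra) (Rle_refl 0)) as hg.
      rewrite g0, !Rminus_0_r, (Rabs_right (2 * slope y)) in hg by (pose proof (slope_ge0 y); lra).
      unfold Rdiv. rewrite Rabs_mult, Rabs_inv, (Rabs_right y) by lra.
      apply (Rmult_le_reg_r y); [lra|]. rewrite Rmult_assoc, Rinv_l, Rmult_1_r by lra.
      eapply Rle_trans; [exact hg|]. rewrite slope_eq by lra. right; ring.
    + apply (continuous_scal_r (2 * L) (fun y => rpow y (pconj - 1))), rpow_continuous. lra.
    + rewrite rpow_nonpos by lra. ring.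
  - intros hs. apply (continuous_ext_loc _ (fun s => ge (2 * slope s) * / s)).
    + eapply filter_imp; [|exact (open_gt 0 s hs)]. intros t ht. unfold gquot.
      destruct (Rlt_dec 0 t); [|lra]. rewrite ge_eq; [easy|]. pose proof (slope_ge0 t). lra.
    + apply (continuous_mult (fun s => ge (2 * slope s)) (fun s => / s)).
      * apply (continuous_comp (fun s => 2 * slope s) ge); [|apply ge_continuous].
        apply (continuous_scal_r 2 slope), slope_continuous.
      * apply continuity_pt_filterlim, continuity_pt_inv; [apply continuity_pt_id | lra].
Qed.

Lemma fV_pos s : 0 < f (V s).
Proof. apply f_pos, V_pos. Qed.

Lemma drho_continuous s : continuous drho s.
Proof.
  apply (continuous_mult (fun s => pconj * (2 * gquot s + k * p * rpow s (p - 1))) (fun s => / f (V s))).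
  - apply (continuous_scal_r pconj (fun s => 2 * gquot s + k * p * rpow s (p - 1))).
    apply (continuous_plus (fun s => 2 * gquot s) (fun s => k * p * rpow s (p - 1))).
    + apply (continuous_scal_r 2 gquot), gquot_continuous.
    + apply (continuous_scal_r (k * p) (fun s => rpow s (p - 1))), rpow_continuous. lra.
  - apply continuity_pt_filterlim, continuity_pt_inv; [|apply Rgt_not_eq, fV_pos].
    apply continuity_pt_filterlim, (continuous_comp V f); [apply V_continuous | apply f_cont, V_pos].
Qed.

Lemma drho_lower s : pconj * (k * p * rpow s (p - 1)) / f (V s) <= drho s.
Proof.
  unfold drho, Rdiv. apply Rmult_le_compat_r; [left; apply Rinv_0_lt_compat, fV_pos|].
  pose proof pconj_gt1. pose proof (gquot_ge0 s). nra.
Qed.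

Lemma drho_ge0 s : 0 <= drho s.
Proof.
  eapply Rle_trans; [|apply drho_lower]. apply Rdiv_le_0_compat; [|apply fV_pos].
  pose proof pconj_gt1. pose proof k_pos. pose proof (rpow_ge0 s (p - 1)).
  apply Rmult_le_pos; [lra|]. apply Rmult_le_pos; [|easy]. apply Rmult_le_pos; lra.
Qed.

Lemma drho_pos s : 0 < s -> 0 < drho s.
Proof.
  intros hs. eapply Rlt_le_trans; [|apply drho_lower]. apply Rdiv_lt_0_compat; [|apply fV_pos].
  pose proof pconj_gt1. pose proof k_pos. pose proof (rpow_gt0 s (p - 1) hs).
  apply Rmult_lt_0_compat; [lra|]. apply Rmult_lt_0_compat; [|easy]. apply Rmult_lt_0_compat; lra.
Qed.

Lemma is_derive_rho s : is_derive rho s (drho s).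
Proof.
  apply (is_derive_RInt drho rho 0); [|apply drho_continuous]. apply filter_forall. intros x.
  apply (@RInt_correct R_CompleteNormedModule), (@ex_RInt_continuous R_CompleteNormedModule).
  intros; apply drho_continuous.
Qed.

Lemma rho0 : rho 0 = 0.
Proof. apply RInt_point_R. Qed.

Lemma rho_incr x y : 0 <= x -> x < y -> rho x < rho y.
Proof.
  apply (strict_incr_of_derive rho drho); intros c hc;
    [apply is_derive_rho | apply drho_ge0 | now apply drho_pos].
Qed.

Lemma rho_mono x y : x <= y -> rho x <= rho y.
Proof.
  intros hxy. pose proof (derive_lower_bound rho drho x y 0 hxy (fun c _ => is_derive_rho c)
    (fun c _ => drho_ge0 c)). lra.
Qed.

Lemma rho_cont x : 0 <= x -> continuity_pt rho x.
Proof. intros _. apply continuity_pt_filterlim, (continuous_of_derive _ _ _ (is_derive_rho x)). Qed.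

(* Differentiating [Fe (V s) = Fe a + Ge (slope s)]. *)
Lemma is_derive_V s : 0 < s -> is_derive V s (drho s * slope s).
Proof.
  intros hs. assert (hw : 0 < slope s) by (apply rpow_gt0, hs).
  pose proof (is_derive_comp Ge slope s _ _ (is_derive_Ge _ hw) (is_derive_rpow s pconj hs)) as D1.
  pose proof (is_derive_plus (fun _ => Fe a) (fun s => Ge (slope s)) s _ _ (is_derive_const (Fe a) s) D1) as Du.
  destruct (V_spec s) as [_ e].
  assert (DF : is_derive (inv_on_nonneg Fe) (Fe (V s)) (/ f (V s))).
  { apply (is_derive_inv_on_nonneg Fe Fe_incr Fe_cont); [apply V_pos | apply fV_pos |].
    rewrite <- fe_eq by (left; apply V_pos). apply is_derive_Fe. }
  rewrite e in DF. pose proof (is_derive_comp _ _ s _ _ DF Du) as D.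
  match type of D with is_derive _ _ ?d => replace (drho s * slope s) with d end.
  { eapply is_derive_ext; [|exact D]. reflexivity. }
  unfold scal, plus, zero; simpl; unfold mult; simpl.
  unfold drho, gquot. destruct (Rlt_dec 0 s); [|lra].
  rewrite ge_eq, slope_rpow by lra. rewrite (slope_eq s) at 3 by lra.
  pose proof (fV_pos s). field. lra.
Qed.

Lemma GinvF_V_le s : 2 * a <= V s -> GinvF (V s) <= 2 * slope s.
Proof.
  intros hV. destruct (V_spec s) as [_ e]. pose proof (slope_ge0 s).
  assert (hFa : Fe a <= Ge (slope s)).
  { pose proof (Fe_le a ltac:(lra)). pose proof (Fe_bounds a (V s) ltac:(lra) ltac:(lra)).
    pose proof (f_pos a ltac:(lra)). nra. }
  pose proof (Ge_superhomogeneous 2 (slope s) ltac:(lra) ltac:(easy)).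
  destruct (GinvF_spec (V s)) as [h1 h2]; [lra|].
  apply (incr_le_inv Ge Ge_incr); [easy|lra|]. lra.
Qed.

Section BoundedIntegral.
Variable l : R.
Hypothesis hB : forall b, 1 <= b -> RInt (fun v => / GinvF v) 1 b <= l.

(* Once [V s >= 2 a], [drho = V' / slope <= 2 V' / GinvF V], and we change variables [v = V s]. *)
Lemma RInt_drho_le s1 s : 0 < s1 <= s -> 2 * a <= V s1 ->
  RInt drho s1 s <= 2 * RInt (fun v => / GinvF v) (V s1) (V s).
Proof.
  intros hs hV1.
  assert (hV : forall σ, s1 <= σ <= s -> 2 * a <= V σ).
  { intros σ hσ. destruct (Req_dec s1 σ) as [<-|]; [easy|]. pose proof (V_incr s1 σ); lra. }
  assert (Hcont : forall σ, continuous (fun σ => / GinvF (V σ)) σ).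
  { intros σ. apply (continuous_comp V (fun v => / GinvF v)); [apply V_continuous|].
    apply inv_GinvF_continuous, V_pos. }
  assert (Hdcont : forall σ, continuous (fun σ => drho σ * slope σ) σ).
  { intros σ. apply (continuous_mult drho slope); [apply drho_continuous | apply slope_continuous]. }
  rewrite <- (@RInt_comp R_CompleteNormedModule (fun v => / GinvF v) V (fun σ => drho σ * slope σ)).
  2:{ intros; apply inv_GinvF_continuous, V_pos. }
  2:{ intros x hx. rewrite Rmin_left, Rmax_right in hx by lra. split; [apply is_derive_V; lra | apply Hdcont]. }
  rewrite <- (@RInt_scal R_CompleteNormedModule).
  2:{ apply (@ex_RInt_continuous R_CompleteNormedModule). intros; apply (continuous_mult _ _ _ (Hdcont _) (Hcont _)). }
  apply RInt_le; [lra| |apply (@ex_RInt_scal R_NormedModule), (@ex_RInt_continuous R_CompleteNormedModule)|].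
  - apply (@ex_RInt_continuous R_CompleteNormedModule). intros; apply drho_continuous.
  - intros; apply (continuous_mult _ _ _ (Hdcont _) (Hcont _)).
  - intros σ hσ. change (drho σ <= 2 * (drho σ * slope σ * / GinvF (V σ))).
    pose proof (GinvF_V_le σ (hV σ ltac:(lra))). pose proof (GinvF_pos (V σ) (V_pos σ)).
    pose proof (drho_ge0 σ). apply (Rmult_le_reg_r (GinvF (V σ))); [easy|].
    replace (2 * (drho σ * slope σ * / GinvF (V σ)) * GinvF (V σ)) with (drho σ * (2 * slope σ)) by (field; lra).
    apply Rmult_le_compat_l; lra.
Qed.

Lemma rho_bounded : exists B, forall s, rho s <= B.
Proof.
  destruct (V_unbounded (2 * a)) as [s1 [hs1 hVs1]].
  assert (hs1p : 0 < s1) by (destruct hs1 as [|<-]; [easy|rewrite V_nonpos in hVs1; lra]).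
  assert (hl0 : 0 <= l) by (rewrite <- (RInt_point_R (fun v => / GinvF v) 1); apply hB, Rle_refl).
  exists (rho s1 + 2 * l). intros s. destruct (Rle_lt_dec s s1) as [hs|hs].
  { pose proof (rho_mono s s1 hs). lra. }
  pose proof (RInt_drho_le s1 s ltac:(lra) ltac:(lra)).
  assert (C : RInt drho 0 s1 + RInt drho s1 s = RInt drho 0 s).
  { apply (@RInt_Chasles R_CompleteNormedModule); apply (@ex_RInt_continuous R_CompleteNormedModule);
      intros; apply drho_continuous. }
  assert (V s1 < V s) by (apply V_incr; lra).
  assert (C2 : RInt (fun v => / GinvF v) 1 (V s1) + RInt (fun v => / GinvF v) (V s1) (V s)
               = RInt (fun v => / GinvF v) 1 (V s)).
  { apply (@RInt_Chasles R_CompleteNormedModule); apply ex_RInt_inv_GinvF; pose proof (V_pos s); lra. }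
  assert (0 <= RInt (fun v => / GinvF v) 1 (V s1)).
  { apply RInt_ge_0; [lra | apply ex_RInt_inv_GinvF; lra |].
    intros x hx. left. apply Rinv_0_lt_compat, GinvF_pos. lra. }
  pose proof (hB (V s) ltac:(lra)). unfold rho. lra.
Qed.
End BoundedIntegral.

Section GrowthCondition.
Hypothesis hK : forall v, a <= v -> 4 * v <= eta * GinvF v.

(* Far from [a] this is [hK] at [V s]; near [a], [Ge (slope s) >= eta (slope s) f a]
   and superhomogeneity of [Ge] would force [GinvF a <= a / eta], against [hK] at [a]. *)
Lemma V_sub_a_lt s : 0 < s -> V s - a < eta * slope s.
Proof.
  intros hs. pose proof eta_pos. assert (hw : 0 < slope s) by (apply rpow_gt0, hs).
  destruct (V_spec s) as [_ e]. pose proof (V_ge_a s).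
  destruct (Rlt_le_dec (V s - a) (eta * slope s)) as [|hge]; [easy|exfalso].
  destruct (Rle_lt_dec (2 * a) (V s)) as [hfar|hnear].
  - pose proof (GinvF_V_le s hfar). pose proof (hK (V s) ltac:(lra)). nra.
  - set (t := a / (eta * slope s)).
    assert (ht : 1 <= t) by (apply Rle_div_r; nra).
    assert (htw : t * (eta * slope s) = a) by (unfold t; field; lra).
    assert (hGw : eta * slope s * f a <= Ge (slope s)).
    { pose proof (Fe_bounds a (V s) ltac:(lra) ltac:(lra)). pose proof (f_pos a ltac:(lra)). nra. }
    pose proof (Ge_superhomogeneous t (slope s) ht ltac:(lra)) as hsup.
    assert (hGa : Ge (GinvF a) <= Ge (a / eta)).
    { destruct (GinvF_spec a) as [_ ->]; [lra|]. replace (a / eta) with (t * slope s) by (unfold t; field; lra).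
      pose proof (Fe_le a ltac:(lra)). nra. }
    destruct (GinvF_spec a) as [h0 _]; [lra|].
    apply (incr_le_inv Ge Ge_incr) in hGa; [|easy|apply Rdiv_le_0_compat; lra].
    pose proof (hK a (Rle_refl a)). apply Rle_div_r in hGa; [|easy]. nra.
Qed.

Lemma g_slope_lt s : 0 < s -> g (slope s) < eta * f (V s).
Proof.
  intros hs. assert (hw : 0 < slope s) by (apply rpow_gt0, hs).
  destruct (V_spec s) as [_ e]. pose proof (V_ge_a s).
  pose proof (Ge_ge_mul_g (slope s) (Rlt_le _ _ hw)).
  pose proof (Fe_bounds a (V s) ltac:(lra) ltac:(lra)).
  pose proof (V_sub_a_lt s hs). pose proof (fV_pos s).
  apply (Rmult_lt_reg_l (slope s)); [easy|]. nra.
Qed.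

Section Solution.
Variable R0 : R.
Hypothesis HR0 : is_lub (fun y => exists s, 0 <= s /\ y = rho s) R0.

Lemma rho_lt_R0 s : 0 <= s -> rho s < R0.
Proof.
  intros hs. assert (rho (s + 1) <= R0) by (apply HR0; exists (s + 1); split; [lra|easy]).
  pose proof (rho_incr s (s + 1) hs ltac:(lra)). lra.
Qed.

Lemma R0_pos : 0 < R0.
Proof. rewrite <- rho0. apply rho_lt_R0, Rle_refl. Qed.

Lemma rho_exceeds r : r < R0 -> exists s, 0 <= s /\ r < rho s.
Proof.
  intros hr. apply NNPP. intros hneg. enough (R0 <= r) by lra.
  apply HR0. intros y [s [hs ->]]. apply Rnot_lt_le. intros hlt. apply hneg. now exists s.
Qed.

(* Vanishes on [(-oo, 0]], which makes [Sinv] continuous at 0. *)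
Definition Sinv r := inv_on_nonneg rho (Rmax 0 r).

Lemma Sinv_spec r : 0 <= r < R0 -> 0 <= Sinv r /\ rho (Sinv r) = r.
Proof.
  intros hr. destruct (rho_exceeds r ltac:(lra)) as [s [hs hrs]].
  unfold Sinv. rewrite Rmax_right by lra.
  destruct (inv_on_nonneg_between rho rho_incr rho_cont 0 s r) as [h1 h2]; [lra|easy|rewrite rho0; lra|].
  split; [lra|easy].
Qed.

Lemma Sinv_nonpos r : r <= 0 -> Sinv r = 0.
Proof.
  intros hr. unfold Sinv. rewrite Rmax_left by exact hr. rewrite <- rho0 at 1.
  apply (inv_on_nonneg_K rho rho_incr), Rle_refl.
Qed.

Lemma Sinv_pos r : 0 < r < R0 -> 0 < Sinv r.
Proof.
  intros hr. destruct (Sinv_spec r) as [[h|h] e]; [lra|easy|]. rewrite <- h, rho0 in e. lra.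
Qed.

Lemma Sinv_incr r1 r2 : 0 <= r1 -> r1 < r2 -> r2 < R0 -> Sinv r1 < Sinv r2.
Proof.
  intros h1 h12 h2. destruct (Sinv_spec r1) as [a1 e1]; [lra|]. destruct (Sinv_spec r2) as [a2 e2]; [lra|].
  apply (incr_lt_inv rho rho_incr); [easy|easy|lra].
Qed.

Lemma Sinv_le r1 r2 : 0 <= r1 -> r1 <= r2 -> r2 < R0 -> Sinv r1 <= Sinv r2.
Proof. intros. destruct (Req_dec r1 r2) as [->|]; [lra|]. left; apply Sinv_incr; lra. Qed.

Lemma Sinv_continuous r : r < R0 -> continuous Sinv r.
Proof.
  intros hr. apply continuous_of_const_nonpos.
  - intros y hy. now rewrite !Sinv_nonpos by lra.
  - rewrite Sinv_nonpos by lra. apply at_right_0_lim. intros eps heps.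
    pose proof (rho_incr 0 eps (Rle_refl 0) heps). pose proof (rho_lt_R0 eps ltac:(lra)). rewrite rho0 in *.
    exists (rho eps). split; [easy|]. intros y hy. destruct (Sinv_spec y) as [h1 e]; [lra|].
    rewrite Rminus_0_r, Rabs_right by lra. apply (incr_lt_inv rho rho_incr); lra.
  - intros hr0. apply (continuous_ext_loc _ (inv_on_nonneg rho)).
    + eapply filter_imp; [|exact (open_gt 0 r hr0)]. intros y hy. unfold Sinv. now rewrite Rmax_right by lra.
    + destruct (Sinv_spec r) as [_ e]; [lra|]. apply continuity_pt_filterlim. rewrite <- e at 1.
      apply (inv_on_nonneg_continuous rho rho_incr rho_cont), Sinv_pos; lra.
Qed.

Lemma is_derive_Sinv r : 0 < r < R0 -> is_derive Sinv r (/ drho (Sinv r)).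
Proof.
  intros hr. destruct (Sinv_spec r) as [_ e]; [lra|]. pose proof (Sinv_pos r hr) as hS.
  pose proof (is_derive_inv_on_nonneg rho rho_incr rho_cont (Sinv r) _ hS (drho_pos _ hS) (is_derive_rho _)) as D.
  rewrite e in D. apply (is_derive_ext_loc (inv_on_nonneg rho)); [|exact D].
  eapply filter_imp; [|exact (open_gt 0 r (proj1 hr))]. intros y hy. unfold Sinv. now rewrite Rmax_right by lra.
Qed.

Definition vsol r := V (Sinv r).

Lemma vsol0 : vsol 0 = a.
Proof. unfold vsol. rewrite Sinv_nonpos by lra. apply V_nonpos, Rle_refl. Qed.

Lemma vsol_incr r s : 0 <= r -> r < s -> s < R0 -> vsol r < vsol s.
Proof. intros. apply V_incr; [apply Sinv_spec; lra | now apply Sinv_incr]. Qed.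

Lemma vsol_le r s : 0 <= r -> r <= s -> s < R0 -> vsol r <= vsol s.
Proof. intros. destruct (Req_dec r s) as [->|]; [lra|]. left; apply vsol_incr; lra. Qed.

Lemma is_derive_vsol r : 0 < r < R0 -> is_derive vsol r (slope (Sinv r)).
Proof.
  intros hr. pose proof (Sinv_pos r hr) as hS.
  pose proof (is_derive_comp V Sinv r _ _ (is_derive_V _ hS) (is_derive_Sinv r hr)) as D.
  replace (slope (Sinv r)) with (scal (/ drho (Sinv r)) (drho (Sinv r) * slope (Sinv r))); [exact D|].
  unfold scal; simpl; unfold mult; simpl. pose proof (drho_pos _ hS). field. lra.
Qed.

Lemma vsol_right_derivative_0 : filterlim (fun h => (vsol h - vsol 0) / h) (at_right 0) (locally 0).
Proof.
  apply (at_right_0_squeeze _ (fun h => slope (Sinv h)) R0 R0_pos).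
  - intros h hh. rewrite vsol0.
    destruct (MVT_interval vsol (fun c => slope (Sinv c)) 0 h) as [c [hc e]]; [lra| | |].
    + intros c hc. apply is_derive_vsol. lra.
    + intros c hc. apply continuity_pt_filterlim, (continuous_comp Sinv V); [apply Sinv_continuous; lra | apply V_continuous].
    + rewrite vsol0, Rminus_0_r in e. rewrite e. unfold Rdiv. rewrite Rmult_assoc, Rinv_r, Rmult_1_r by lra.
      rewrite Rabs_right by apply Rle_ge, slope_ge0.
      apply slope_le; [apply Sinv_spec; lra | apply Sinv_le; lra].
  - apply (continuous_comp Sinv slope); [apply Sinv_continuous, R0_pos | apply slope_continuous].
  - rewrite Sinv_nonpos by lra. unfold slope. now rewrite rpow_nonpos by lra.
Qed.

Lemma vsol_blowup : filterlim vsol (at_left R0) (Rbar_locally p_infty).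
Proof.
  intros P [M HP]. destruct (V_unbounded M) as [s [hs hMs]].
  pose proof (rho_lt_R0 s hs). pose proof (rho_mono 0 s hs). rewrite rho0 in *.
  exists (mkposreal (R0 - rho s) ltac:(lra)). intros x hx hxR. apply HP.
  rewrite ball_R in hx. apply Rabs_def2 in hx. simpl in hx.
  destruct (Sinv_spec x) as [h1 e]; [lra|].
  assert (hsx : s < Sinv x) by (apply (incr_lt_inv rho rho_incr); lra).
  pose proof (V_incr s (Sinv x) hs hsx). unfold vsol. lra.
Qed.

Definition z r := rpow (Sinv r) p.

Lemma Derive_vsol_rpow t : 0 < t < R0 -> rpow (Derive vsol t) (p - 1) = z t.
Proof.
  intros ht. rewrite (is_derive_unique _ _ _ (is_derive_vsol t ht)). unfold slope, z.
  rewrite rpow_rpow. f_equal. unfold pconj. field. lra.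
Qed.

Lemma is_derive_z r : 0 < r < R0 -> is_derive z r (p * rpow (Sinv r) (p - 1) * / drho (Sinv r)).
Proof.
  intros hr. pose proof (Sinv_pos r hr) as hS.
  pose proof (is_derive_comp (fun t => rpow t p) Sinv r _ _ (is_derive_rpow _ p hS) (is_derive_Sinv r hr)) as D.
  match type of D with is_derive _ _ ?d => replace (p * rpow (Sinv r) (p - 1) * / drho (Sinv r)) with d end;
    [exact D|]. unfold scal; simpl; unfold mult; simpl. ring.
Qed.

(* The lower bound [drho >= pconj k p s^(p-1) / f (V s)] and [pconj k = cconst p n]. *)
Lemma dz_le c : 0 <= c < R0 -> p * rpow (Sinv c) (p - 1) * / drho (Sinv c) <= f (vsol c) / cconst p n.
Proof.
  intros hc. pose proof n_lt_cconst. pose proof INR_n_ge1. pose proof (fV_pos (Sinv c)) as hf. fold (vsol c) in hf.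
  destruct (Req_dec c 0) as [->|hc0].
  { rewrite Sinv_nonpos, rpow_nonpos by lra. rewrite Rmult_0_r, Rmult_0_l. apply Rdiv_le_0_compat; lra. }
  assert (hS : 0 < Sinv c) by (apply Sinv_pos; lra).
  pose proof (drho_lower (Sinv c)) as hlb. pose proof (drho_pos _ hS).
  pose proof (rpow_gt0 (Sinv c) (p - 1) hS). pose proof k_pos. pose proof pconj_gt1.
  rewrite <- pconj_k. apply (Rmult_le_reg_r (drho (Sinv c))); [easy|].
  rewrite Rmult_assoc, Rinv_l, Rmult_1_r by lra.
  apply Rle_trans with (f (vsol c) / (pconj * k) * (pconj * (k * p * rpow (Sinv c) (p - 1)) / f (vsol c))).
  - right. field. repeat split; lra.
  - apply Rmult_le_compat_l; [apply Rdiv_le_0_compat; [lra | apply Rmult_lt_0_compat; lra] | exact hlb].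
Qed.

Lemma z_le r : 0 < r < R0 -> z r <= r * (f (vsol r) / cconst p n).
Proof.
  intros hr.
  destruct (MVT_interval z (fun c => p * rpow (Sinv c) (p - 1) * / drho (Sinv c)) 0 r) as [c [hc e]]; [lra| | |].
  - intros c hc. apply is_derive_z. lra.
  - intros c hc. apply continuity_pt_filterlim, (continuous_comp Sinv (fun t => rpow t p));
      [apply Sinv_continuous; lra | apply rpow_continuous; lra].
  - unfold z at 2 in e. rewrite Sinv_nonpos, rpow_nonpos, Rminus_0_r, Rminus_0_r in e by lra.
    pose proof (dz_le c ltac:(lra)). pose proof n_lt_cconst. pose proof INR_n_ge1.
    assert (f (vsol c) <= f (vsol r)) by (apply (incr_le f f_incr); [left; apply V_pos | apply vsol_le; lra]).
    assert (f (vsol c) / cconst p n <= f (vsol r) / cconst p n) by (apply Rmult_le_compat_r; [left; apply Rinv_0_lt_compat; lra | easy]).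
    nra.
Qed.

Lemma vsol_supersolution r : 0 < r < R0 ->
  ex_derive vsol r /\
  ex_derive (fun t => rpow (Derive vsol t) (p - 1)) r /\
  Derive (fun t => rpow (Derive vsol t) (p - 1)) r + (INR n - 1) / r * rpow (Derive vsol r) (p - 1)
    < f (vsol r) - g (Derive vsol r).
Proof.
  intros hr.
  assert (Dz : is_derive (fun t => rpow (Derive vsol t) (p - 1)) r (p * rpow (Sinv r) (p - 1) * / drho (Sinv r))).
  { apply (is_derive_ext_loc z); [|now apply is_derive_z].
    eapply filter_imp; [|exact (filter_and _ _ (open_gt 0 r (proj1 hr)) (open_lt R0 r (proj2 hr)))].
    intros t [ht1 ht2]. symmetry. apply Derive_vsol_rpow. lra. }
  split; [eexists; exact (is_derive_vsol r hr)|]. split; [eexists; exact Dz|].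
  replace (Derive (fun t => rpow (Derive vsol t) (p - 1)) r) with (p * rpow (Sinv r) (p - 1) * / drho (Sinv r))
    by (symmetry; now apply is_derive_unique).
  rewrite Derive_vsol_rpow, (is_derive_unique _ _ _ (is_derive_vsol r hr)) by easy.
  pose proof (dz_le r ltac:(lra)). pose proof (z_le r hr).
  pose proof (g_slope_lt (Sinv r) (Sinv_pos r hr)). pose proof (fV_pos (Sinv r)). fold (vsol r) in *.
  pose proof INR_n_ge1. pose proof n_lt_cconst.
  assert ((INR n - 1) / r * z r <= (INR n - 1) * (f (vsol r) / cconst p n)).
  { apply (Rmult_le_reg_l r); [lra|]. replace (r * ((INR n - 1) / r * z r)) with ((INR n - 1) * z r) by (field; lra).
    replace (r * ((INR n - 1) * (f (vsol r) / cconst p n))) with ((INR n - 1) * (r * (f (vsol r) / cconst p n))) by ring.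
    apply Rmult_le_compat_l; lra. }
  assert (INR n * (f (vsol r) / cconst p n) = (1 - eta) * f (vsol r)) by (rewrite <- eta_cconst; field; lra).
  nra.
Qed.
End Solution.
End GrowthCondition.
End Construction.
End Setting.
Theorem lemma5p1 (p : R) (n : nat) (f g : R -> R)
  (hp : 1 < p) (hn : (1 <= n)%nat)
  (* f in C([0,oo)) *)
  (hfc : forall x, 0 < x -> continuous f x)
  (hfc0 : filterlim f (at_right 0) (locally (f 0)))
  (hfinc : forall x y, 0 <= x -> x < y -> f x < f y)
  (hf0 : f 0 = 0)
  (* g in C^{0,1}([0,oo)) *)
  (hgLip : exists L, forall x y, 0 <= x -> 0 <= y -> Rabs (g x - g y) <= L * Rabs (x - y))
  (hginc : forall x y, 0 <= x -> x < y -> g x < g y)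
  (hg0 : g 0 = 0)
  (* int_1^oo ds / Gamma^{-1}(F(s)) < oo *)
  (hKO : ex_RInt_gen (fun s => / inv_on_nonneg (Gamma p n g) (Fprim f s))
           (at_point 1) (Rbar_locally p_infty)) :
  exists V0 : R, forall v0 : R, V0 < v0 ->
    exists (R0 : R) (v : R -> R),
      0 < R0 /\
      v 0 = v0 /\
      (* v'(0) = 0 (right derivative) *)
      filterlim (fun h => (v h - v 0) / h) (at_right 0) (locally 0) /\
      (* v increasing on [0,R0) *)
      (forall r s, 0 <= r -> r < s -> s < R0 -> v r < v s) /\
      (* strict supersolution on (0,R0) *)
      (forall r, 0 < r < R0 ->
         ex_derive v r /\
         ex_derive (fun t => rpow (Derive v t) (p - 1)) r /\
         Derive (fun t => rpow (Derive v t) (p - 1)) r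
           + (INR n - 1) / r * rpow (Derive v r) (p - 1)
           < f (v r) - g (Derive v r)) /\
      (* blow-up at R0 *)
      filterlim v (at_left R0) (Rbar_locally p_infty).
Proof.
  destruct hgLip as [L hL]. destruct hKO as [l hl]. apply is_RInt_gen_inv_GinvF in hl.
  edestruct GinvF_growth as [A [hA1 hA]]; eauto.
  exists A. intros v0 hv0.
  assert (hK : forall v, v0 <= v -> 4 * v <= eta p n * GinvF p n f g v) by (intros; apply hA; lra).
  assert (ha : 1 <= v0) by lra.
  edestruct (rho_bounded p n f g L) with (a := v0) as [B hB]; eauto; [eapply RInt_inv_GinvF_le; eauto|].
  destruct (completeness (fun y => exists s, 0 <= s /\ y = rho p n f g v0 s)) as [R0 HR0].
  { exists B. intros y [s [_ ->]]. apply hB. }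
  { exists 0, 0. now rewrite rho0. }
  exists R0, (vsol p n f g v0).
  split; [eapply R0_pos; eauto|]. split; [eapply vsol0; eauto|].
  split; [eapply vsol_right_derivative_0; eauto|]. split; [intros; eapply vsol_incr; eauto|].
  split; [intros; eapply vsol_supersolution; eauto | eapply vsol_blowup; eauto].
Qed.
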